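(* Let $n\ge1$ and $|\psi\rangle=\sum_{k=0}^n d_k|D^n_k\rangle$ with $d_k\in\mathbb{C}$ and $d_0\neq0$. For $y\in\mathbb{C}$ and $x_1,\dots,x_n\in\mathbb{C}$ let $A_0=y\,\mathbb{1}_n$ and $A_1=\mathrm{diag}(x_1,\dots,x_n)$. Then $|\psi\rangle=\sum_{(i_1,\dots,i_n)\in\{0,1\}^n}\mathrm{Tr}[A_{i_1}\cdots A_{i_n}]\,|i_1\cdots i_n\rangle$ if and only if $y^n=d_0/n$ and $x_1^k+\cdots+x_n^k=\dfrac{d_k}{y^{n-k}\sqrt{\binom nk}}$ for all $k=1,\dots,n$ (in particular $x_1^n+\cdots+x_n^n=d_n$). Consequently, for any $y$ with $y^n=d_0/n$, the corresponding $x_1,\dots,x_n$ are exactly (up to permutation) the roots, with multiplicity, of $P(X)=\sum_{m=0}^n\frac{n!}{m!}Q_m(\boldsymbol z)X^{n-m}$ with $z_k=\dfrac{d_k}{y^{n-k}\sqrt{\binom nk}}$.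
   Context: $|D^n_k\rangle=\binom nk^{-1/2}\sum_{\vec i\in\{0,1\}^n,\ \sum_j i_j=k}|\vec i\rangle$ is the normalized $n$-qubit Dicke state with $k$ excitations, and $|i_1\cdots i_n\rangle$ is the computational basis. For $m\ge1$, a partition $\boldsymbol\lambda\vdash m$ is written $(\lambda_1^{\mu_1},\dots,\lambda_k^{\mu_k})$ with distinct parts $\lambda_1>\cdots>\lambda_k\ge1$ of multiplicities $\mu_i\ge1$, $\sum\mu_i\lambda_i=m$; $Q_m(\boldsymbol z)=\sum_{\boldsymbol\lambda\vdash m}\xi_{\boldsymbol\lambda}\prod_{i=1}^kz_{\lambda_i}^{\mu_i}$ with $\xi_{\boldsymbol\lambda}=m!\prod_{i=1}^k\frac{(-1)^{\mu_i}}{\mu_i!\lambda_i^{\mu_i}}$, and $Q_0:=1$. *)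

(* Complex scalars: any numClosedFieldType C (e.g. complex R). *)
From HB Require Import structures.
From mathcomp Require Import all_boot all_order all_algebra.
Set Implicit Arguments. Unset Strict Implicit. Unset Printing Implicit Defensive.
Import Order.TTheory GRing.Theory Num.Theory.
Local Open Scope ring_scope.

(* computational basis labels |i_1 ... i_n>, i_l in {0,1} (false = 0, true = 1) *)
Definition bits (n : nat) := {ffun 'I_n -> bool}.

Definition weight n (i : bits n) : nat := #|[set l | i l]|.

Definition dicke (C : numClosedFieldType) (n k : nat) (i : bits n) : C :=
  if weight i == k then (sqrtC ('C(n, k))%:R)^-1 else 0.

Definition dicke_sum (C : numClosedFieldType) (n : nat) (d : nat -> C) (i : bits n) : C :=
  \sum_(k < n.+1) d k * @dicke C n k i.

Definition mps_coef (C : numClosedFieldType) (n D : nat) (A : bool -> 'M[C]_D)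
  (i : bits n) : C :=
  \tr (foldr (@mulmx C D D D) 1%:M [seq A (i l) | l <- enum 'I_n]).

Definition Amat (C : numClosedFieldType) (n : nat) (y : C) (x : 'I_n -> C)
  (b : bool) : 'M[C]_n :=
  if b then diag_mx (\row_j x j) else y%:M.

(* A partition of m is encoded by its multiplicity function mu : 'I_m -> 'I_m.+1,
   mu i = multiplicity of the part (i+1), subject to sum_i (i+1) mu_i = m.
   Parts with multiplicity 0 contribute the factor 1. For m = 0 this gives 1. *)
Definition Qm (C : numClosedFieldType) (m : nat) (z : nat -> C) : C :=
  \sum_(mu : {ffun 'I_m -> 'I_m.+1} | (\sum_(i < m) i.+1 * mu i)%N == m)
     (m`!%:R * \prod_(i < m)
        ((-1) ^+ (mu i) / ((mu i)`!%:R * (i.+1)%:R ^+ (mu i)) * z i.+1 ^+ (mu i))).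

Definition zcoef (C : numClosedFieldType) (n : nat) (d : nat -> C) (y : C) (k : nat) : C :=
  d k / (y ^+ (n - k) * sqrtC ('C(n, k))%:R).

Definition Ppoly (C : numClosedFieldType) (n : nat) (z : nat -> C) : {poly C} :=
  \sum_(m < n.+1) ((n`!%:R / m`!%:R) * Qm m z) *: 'X^(n - m).

(* Both sides of the first equivalence are diagonal in the weight k of the
   basis label: the MPS coefficient is y^(n-k) p_k(x), with p_k the k-th power
   sum, and the Dicke coefficient is d_k / sqrt(C(n,k)).
   For the second, Q_m(z)/m! is the X^m coefficient of exp(-sum_k z_k X^k / k),
   while prod_j (1 - x_j X), the reversal of prod_j (X - x_j), satisfies
   X G' = -(sum_k p_k X^k) G.  Solutions H, H(0) = 1, of X H' + S H = 0 modulo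
   X^(N+1) with S(0) = 0 satisfy k H_k + S_k = -sum_(0<l<k) S_l H_(k-l), so their first N+1
   coefficients and those of S determine each other; hence
   P = n! prod_j (X - x_j) exactly when p_k = z_k for k <= n. *)

From HB Require Import structures.
From mathcomp Require Import all_boot all_order all_algebra.
From mathcomp Require Import ring.
Import Order.TTheory GRing.Theory Num.Theory.
Local Open Scope ring_scope.
Set Implicit Arguments. Unset Strict Implicit.

Section LogDerivative.
Variable R : numFieldType.
Implicit Types (S H : {poly R}) (N : nat).

(* H'/H = -S/X as power series, up to order N. *)
Definition logder_mod N S H := 'X^(N.+1) %| 'X * H^`() + S * H.

Lemma logder_modM N s t f g :
  logder_mod N s f -> logder_mod N t g -> logder_mod N (s + t) (f * g).
Proof.
rewrite /logder_mod => hf hg; have -> : 'X * (f * g)^`() + (s + t) * (f * g) =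
    ('X * f^`() + s * f) * g + f * ('X * g^`() + t * g) by rewrite derivM; ring.
by apply: dvdp_add; [apply: dvdp_mulr | apply: dvdp_mull].
Qed.

Lemma logder_mod_prod N I (r : seq I) (P : pred I) (s h : I -> {poly R}) :
  (forall i, P i -> logder_mod N (s i) (h i)) ->
  logder_mod N (\sum_(i <- r | P i) s i) (\prod_(i <- r | P i) h i).
Proof.
move=> shP; apply: (big_rec2 (logder_mod N)) => [|i S H /shP hi hSH].
  by rewrite /logder_mod derivC mulr0 mul0r addr0 dvdp0.
exact: logder_modM.
Qed.

Lemma logder_mod_le M N S H : (M <= N)%N -> logder_mod N S H -> logder_mod M S H.
Proof. by move=> leMN; apply: dvdp_trans; rewrite dvdp_exp2l. Qed.

Lemma logder_mod_coef N S H i : logder_mod N S H -> (i <= N)%N ->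
  i%:R * H`_i + \sum_(l < i.+1) S`_l * H`_(i - l) = 0.
Proof.
move=> /dvdpP [q e] leiN; have := congr1 (fun p : {poly R} => p`_i) e.
rewrite /= coefD coefXM coefM coefMXn ltnS leiN.
by case: i leiN => [|i] _ /=; rewrite ?mul0r ?add0r // coef_deriv mulr_natl.
Qed.

Lemma logder_mod_coefS N S H i : logder_mod N S H -> S`_0 = 0 -> H`_0 = 1 ->
  (i < N)%N -> i.+1%:R * H`_i.+1 + S`_i.+1 = - \sum_(l < i) S`_l.+1 * H`_(i - l).
Proof.
move=> hSH S0 H0 ltiN; have := logder_mod_coef hSH ltiN.
rewrite big_ord_recr big_ord_recl /= S0 subnn H0 mul0r mulr1 add0r.
by rewrite addrCA addrC => /eqP; rewrite addr_eq0 => /eqP.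
Qed.

Lemma forall_leqS (P : nat -> Prop) N :
  P N.+1 -> (forall l, (l <= N)%N -> P l) -> forall l, (l <= N.+1)%N -> P l.
Proof. by move=> PN PleN l; rewrite leq_eqVlt => /predU1P [-> // | /PleN]. Qed.

Lemma logder_mod_coef_eq N S1 S2 H1 H2 :
  logder_mod N S1 H1 -> logder_mod N S2 H2 ->
  S1`_0 = 0 -> S2`_0 = 0 -> H1`_0 = 1 -> H2`_0 = 1 ->
  (forall l, (l <= N)%N -> S1`_l = S2`_l) <-> (forall i, (i <= N)%N -> H1`_i = H2`_i).
Proof.
move=> + + S10 S20 H10 H20; elim: N => [|N IH] hSH1 hSH2.
  by split=> _ [|l]; rewrite ?S10 ?S20 ?H10 ?H20.
have [IHSH IHHS] := IH (logder_mod_le (leqnSn N) hSH1) (logder_mod_le (leqnSn N) hSH2).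
have key : (forall l, (l <= N)%N -> S1`_l = S2`_l) -> (forall i, (i <= N)%N -> H1`_i = H2`_i) ->
    N.+1%:R * H1`_N.+1 + S1`_N.+1 = N.+1%:R * H2`_N.+1 + S2`_N.+1.
  move=> eqS eqH; rewrite (logder_mod_coefS hSH1) ?(logder_mod_coefS hSH2) //.
  congr (- _).
  by apply: eq_bigr => l _; rewrite eqS ?eqH ?leq_subr.
have N1_neq0 : N.+1%:R != 0 :> R by rewrite pnatr_eq0.
split=> [eqS | eqH].
  have eqS' l (hl : (l <= N)%N) := eqS l (leqW hl).
  have eqH' := IHSH eqS'; apply: (forall_leqS _ eqH').
  apply: (mulfI N1_neq0); apply: (addIr (S1`_N.+1)).
  by rewrite [in RHS]eqS // key.
have eqH' i (hi : (i <= N)%N) := eqH i (leqW hi).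
have eqS' := IHHS eqH'; apply: (forall_leqS _ eqS').
by apply: (addrI (N.+1%:R * H1`_N.+1)); rewrite key // eqH.
Qed.
End LogDerivative.

Section Reversal.
Variable R : numFieldType.
Implicit Types p q : {poly R}.

Definition revp n (p : {poly R}) := \poly_(i < n.+1) p`_(n - i).

Lemma eq_revp n p q : revp n p = revp n q <-> forall i, (i <= n)%N -> p`_i = q`_i.
Proof.
split=> [e i lein | e].
  by have := congr1 (fun r : {poly R} => r`_(n - i)) e; rewrite /= !coef_poly ltnS leq_subr subKn.
by apply/polyP => i; rewrite !coef_poly; case: ifP => // _; rewrite e ?leq_subr.
Qed.

Lemma lead_coef_revp n p : p`_0 != 0 -> lead_coef (revp n p) = p`_0.
Proof. by move=> p0; rewrite lead_coef_poly //= subnn. Qed.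

Lemma revpK n p : (size p <= n.+1)%N -> revp n (revp n p) = p.
Proof.
move=> szp; apply/polyP => i; rewrite !coef_poly !ltnS.
case: leqP => [lein | ltni]; first by rewrite leq_subr subKn.
by rewrite nth_default // (leq_trans szp).
Qed.

Lemma prod_1subZX_revp I (r : seq I) (x : I -> R) :
  \prod_(i <- r) (1 - x i *: 'X) = revp (size r) (\prod_(i <- r) ('X - (x i)%:P)).
Proof.
elim: r => [|i r IH]; first by apply/polyP => -[|k]; rewrite !big_nil coef_poly coef1.
rewrite !big_cons IH /=; set P := \prod_(j <- r) _.
have P_top : P`_(size r).+1 = 0 by rewrite nth_default // size_prod_XsubC.
apply/polyP => k; rewrite mulrBl mul1r -scalerAl coefB coefZ coefXM !coef_poly.
rewrite mulrBl coefB coefXM coefCM; case: k => [|k] /=.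
  by rewrite !subn0 P_top mulr0 !subr0.
rewrite !ltnS subSS subnS subn_eq0.
case: ltngtP => [ltkm | ltmk | ->]; rewrite ?subnn ?mulr0 ?subr0 //.
Qed.

Lemma prod_XsubC_revp (I : finType) (x : I -> R) :
  \prod_(i : I) ('X - (x i)%:P) = revp #|I| (\prod_(i : I) (1 - x i *: 'X)).
Proof.
have -> : #|I| = size (index_enum I) by rewrite cardT enumT [index_enum _]unlock.
by rewrite prod_1subZX_revp revpK ?size_prod_XsubC.
Qed.

End Reversal.

Section TruncatedSeries.
Variable R : numFieldType.
Implicit Types (N : nat) (z : nat -> R).

Definition expX N (c : R) e : {poly R} := \sum_(j < N.+1) (c ^+ j / j`!%:R) *: 'X^(e * j).

Lemma XderivZXn (a : R) m : 'X * (a *: 'X^m)^`() = (a * m%:R) *: 'X^m.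
Proof.
rewrite derivZ derivXn -scalerAr -scalerA scaler_nat.
by case: m => [|m]; rewrite ?mulr0n ?mulr0 // mulrnAr -exprS.
Qed.

Lemma logder_mod_expX N c e : (0 < e)%N ->
  logder_mod N (- (c * e%:R) *: 'X^e) (expX N c e).
Proof.
move=> e_gt0; rewrite /logder_mod /expX raddf_sum !mulr_sumr.
under eq_bigr do rewrite XderivZXn.
under [X in _ + X]eq_bigr do rewrite -scalerAl -scalerAr -exprD -mulnS.
(* the two sums telescope down to the term c^(N+1) e / N! X^(e (N+1)) *)
rewrite big_ord_recl big_ord_recr /= muln0 mulr0 scale0r add0r addrA -big_split /=.
rewrite big1 ?add0r => [|j _].
  rewrite scalerA -mul_polyC; apply: dvdp_mull.
  by rewrite dvdp_exp2l // -{1}[N.+1]mul1n leq_mul2r e_gt0 orbT.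
have fact_neq0 : j`!%:R != 0 :> R by rewrite pnatr_eq0 -lt0n fact_gt0.
rewrite /bump add1n scalerA -scalerDl [X in X *: _](_ : _ = 0) ?scale0r //.
by rewrite factS !natrM exprS; field; rewrite fact_neq0 addrC natr1 pnatr_eq0.
Qed.

Definition gen_series N (z : nat -> R) : {poly R} := \poly_(k < N) z k.+1 * 'X.

Lemma coef_gen_series N z l :
  (gen_series N z)`_l = if (0 < l <= N)%N then z l else 0.
Proof. by rewrite coefMX coef_poly; case: l. Qed.

Lemma gen_series_sum N I (r : seq I) (z : I -> nat -> R) :
  \sum_(i <- r) gen_series N (z i) = gen_series N (fun k => \sum_(i <- r) z i k).
Proof.
apply/polyP => l; rewrite coef_sum coef_gen_series.
under eq_bigr do rewrite coef_gen_series.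
by case: ifP => // _; rewrite big1.
Qed.

Lemma gen_series_geom N a :
  gen_series N (fun k => a ^+ k) = (a *: 'X) * \sum_(k < N) (a *: 'X) ^+ k.
Proof.
rewrite /gen_series poly_def mulr_suml mulr_sumr; apply: eq_bigr => k _.
by rewrite -exprS !exprZn -scalerAl -exprSr.
Qed.

Lemma logder_mod_1subZX N a : logder_mod N (gen_series N (fun k => a ^+ k)) (1 - a *: 'X).
Proof.
have geom : (1 - a *: 'X) * \sum_(k < N) (a *: 'X) ^+ k = 1 - (a *: 'X) ^+ N.
  by rewrite -opprB mulNr -subrX1 opprB.
rewrite /logder_mod gen_series_geom mulrAC -mulrA geom.
rewrite derivB derivC derivZ derivX sub0r.
have -> : 'X * - (a *: 1) + a *: 'X * (1 - (a *: 'X) ^+ N) = - (a *: 'X) ^+ N.+1.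
  by rewrite mulrN -scalerAr mulr1 mulrBr mulr1 -exprS addrA addNr sub0r.
by rewrite dvdpNr exprZn -mul_polyC dvdp_mull.
Qed.

Definition exp_series N (z : nat -> R) : {poly R} :=
  \prod_(k < N) expX N (- (z k.+1 / k.+1%:R)) k.+1.

Lemma logder_mod_exp_series N z : logder_mod N (gen_series N z) (exp_series N z).
Proof.
have -> : gen_series N z = \sum_(k < N) - (- (z k.+1 / k.+1%:R) * k.+1%:R) *: 'X^(k.+1).
  rewrite /gen_series poly_def mulr_suml; apply: eq_bigr => k _.
  by rewrite mulNr opprK divfK ?pnatr_eq0 // -scalerAl -exprSr.
by apply: logder_mod_prod => k _; apply: logder_mod_expX.
Qed.

Lemma coef0_expX N c e : (0 < e)%N -> (expX N c e)`_0 = 1.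
Proof.
move=> e_gt0; rewrite /expX coef_sum big_ord_recl big1 => [|j _].
  by rewrite coefZ coefXn muln0 expr0 fact0 divr1 mulr1 addr0.
by rewrite coefZ coefXn eq_sym muln_eq0 /= (negbTE (lt0n_neq0 e_gt0)) mulr0.
Qed.

Lemma coef0_exp_series N z : (exp_series N z)`_0 = 1.
Proof. by rewrite coef0_prod big1 // => k _; rewrite coef0_expX. Qed.

Lemma coef_exp_series_trunc m i z : (i <= m)%N -> (exp_series m z)`_i = (exp_series i z)`_i.
Proof.
move=> leim; have hm := logder_mod_le leim (logder_mod_exp_series m z).
have [agree _] := logder_mod_coef_eq hm (logder_mod_exp_series i z)
  (coef_gen_series _ _ _) (coef_gen_series _ _ _) (coef0_exp_series _ _) (coef0_exp_series _ _).
apply: (agree _ i (leqnn i)) => l leli.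
by rewrite !coef_gen_series leli (leq_trans leli leim).
Qed.

Lemma logder_mod_prod_1subZX N I (r : seq I) (x : I -> R) :
  logder_mod N (gen_series N (fun k => \sum_(i <- r) x i ^+ k)) (\prod_(i <- r) (1 - x i *: 'X)).
Proof.
by rewrite -gen_series_sum; apply: logder_mod_prod => i _; apply: logder_mod_1subZX.
Qed.

Lemma coef0_prod_1subZX I (r : seq I) (x : I -> R) : (\prod_(i <- r) (1 - x i *: 'X))`_0 = 1.
Proof. by rewrite coef0_prod big1 // => i _; rewrite coefB coef1 coefZ coefX mulr0 subr0. Qed.

Lemma power_sums_exp_series N (I : finType) (x : I -> R) z :
  (forall k, (1 <= k <= N)%N -> \sum_i x i ^+ k = z k) <->
  revp N (exp_series N z) = revp N (\prod_i (1 - x i *: 'X)).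
Proof.
rewrite eq_revp -(logder_mod_coef_eq (logder_mod_exp_series N z) (logder_mod_prod_1subZX N _ x))
  ?coef_gen_series ?coef0_exp_series ?coef0_prod_1subZX //.
split=> [eq_pz l lelN | eq_coef k /andP [k_gt0 lekN]].
  by rewrite !coef_gen_series lelN andbT; case: ifP => // l_gt0; rewrite eq_pz ?l_gt0.
by have := eq_coef k lekN; rewrite !coef_gen_series k_gt0 lekN.
Qed.
End TruncatedSeries.

Section NewtonPolynomial.
Variable C : numClosedFieldType.
Implicit Types (n m : nat) (z : nat -> C).

Lemma Qm_exp_series m z : Qm m z = m`!%:R * (exp_series m z)`_m.
Proof.
(* expanding the product, the terms contributing to X^m are indexed by the
   multiplicity functions of the partitions of m *)
rewrite /Qm /exp_series /expX -mulr_sumr; congr (_ * _).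
rewrite bigA_distr_bigA /= coef_sum big_mkcond /=; apply: eq_bigr => mu _.
rewrite scaler_prod prodrXr coefZ coefXn eq_sym.
case: eqP => _; rewrite ?mulr0 ?mulr1 //; apply: eq_bigr => k _.
have fact_neq0 : (mu k)`!%:R != 0 :> C by rewrite pnatr_eq0 -lt0n fact_gt0.
have k1_neq0 : k.+1%:R ^+ mu k != 0 :> C by rewrite expf_neq0 ?pnatr_eq0.
rewrite [in RHS]exprNn expr_div_n; field.
by rewrite fact_neq0 k1_neq0.
Qed.

Lemma Ppoly_revp n z : Ppoly n z = n`!%:R *: revp n (exp_series n z).
Proof.
rewrite /Ppoly (reindex_inj rev_ord_inj) /revp poly_def scaler_sumr; apply: eq_bigr => i _ /=.
have lein : (i <= n)%N := ltn_ord i.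
rewrite subKn // scalerA Qm_exp_series -(coef_exp_series_trunc _ (leq_subr i n)) //.
by rewrite mulrA divfK // pnatr_eq0 -lt0n fact_gt0.
Qed.

Lemma Ppoly_eq_prod_XsubC n z (x : 'I_n -> C) :
  Ppoly n z = lead_coef (Ppoly n z) *: \prod_(j < n) ('X - (x j)%:P) <->
  revp n (exp_series n z) = revp n (\prod_(j < n) (1 - x j *: 'X)).
Proof.
have fact_neq0 : n`!%:R != 0 :> C by rewrite pnatr_eq0 -lt0n fact_gt0.
rewrite Ppoly_revp lead_coefZ lead_coef_revp ?coef0_exp_series ?oner_neq0 // mulr1.
by rewrite prod_XsubC_revp card_ord; split=> [/(scalerI fact_neq0) | ->].
Qed.
End NewtonPolynomial.

Lemma foldr_mulmx_diag (R : pzRingType) n (s : seq 'rV[R]_n) :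
  foldr (@mulmx R n n n) 1%:M [seq diag_mx v | v <- s] = diag_mx (\row_j \prod_(v <- s) v 0 j).
Proof.
elim: s => [|v s IH] /=.
  by rewrite -diag_const_mx; congr diag_mx; apply/rowP => j; rewrite !mxE big_nil.
by rewrite IH mulmx_diag; congr diag_mx; apply/rowP => j; rewrite !mxE big_cons.
Qed.

Section DickeMPS.
Variable C : numClosedFieldType.
Variable n : nat.
Implicit Types (i : bits n) (d : nat -> C) (y : C) (x : 'I_n -> C).

Lemma weight_le i : (weight i <= n)%N.
Proof. by rewrite -[X in (_ <= X)%N]card_ord max_card. Qed.

Lemma exists_weight k : (k <= n)%N -> exists i : bits n, weight i = k.
Proof.
move=> lekn; exists [ffun l : 'I_n => (l < k)%N].
rewrite /weight -sum1_card (eq_bigl (fun l : 'I_n => (l < k)%N)) => [|l]; last by rewrite !inE ffunE.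
by rewrite -(big_ord_widen n (fun _ => 1%N) lekn) sum1_card card_ord.
Qed.

Lemma weightE i : weight i = #|[pred l | i l]|.
Proof. by apply: eq_card => l; rewrite inE. Qed.

Lemma card_weightC i : #|[pred l | ~~ i l]| = (n - weight i)%N.
Proof.
have := cardC [pred l | i l]; rewrite card_ord weightE.
have -> : #|[pred l | ~~ i l]| = #|[predC [pred l | i l]]| by apply: eq_card => l; rewrite !inE.
move=> hC; apply/eqP; rewrite -(eqn_add2l #|[pred l | i l]|) hC subnKC //.
by rewrite -[X in (_ <= X)%N]card_ord max_card.
Qed.

Lemma dicke_sumE d i : dicke_sum d i = d (weight i) / sqrtC ('C(n, weight i))%:R.
Proof.
have ltwn : (weight i < n.+1)%N by rewrite ltnS weight_le.
rewrite /dicke_sum (bigD1 (Ordinal ltwn)) //= big1 ?addr0 => [|k neqk].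
  by rewrite /dicke eqxx.
by rewrite /dicke; case: eqP => [ek|_]; rewrite ?mulr0 //; case/eqP: neqk; exact/val_inj/esym.
Qed.

Lemma Amat_diag y x b : Amat y x b = diag_mx (\row_j (if b then x j else y)).
Proof.
rewrite /Amat; case: b; first by congr diag_mx; apply/rowP => j; rewrite !mxE.
by rewrite -diag_const_mx; congr diag_mx; apply/rowP => j; rewrite !mxE.
Qed.

Lemma mps_coefE y x i :
  mps_coef (Amat y x) i = y ^+ (n - weight i) * \sum_(j < n) x j ^+ weight i.
Proof.
rewrite /mps_coef (eq_map (fun l => Amat_diag y x (i l))) (map_comp diag_mx).
rewrite foldr_mulmx_diag mxtrace_diag mulr_sumr; apply: eq_bigr => j _.
rewrite mxE big_map big_enum /= (bigID (fun l => i l)) /=.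
rewrite (eq_bigr (fun _ => x j)) => [|l il]; last by rewrite mxE il.
rewrite [X in _ * X](eq_bigr (fun _ => y)) => [|l /negPf il]; last by rewrite mxE il.
rewrite !prodr_const mulrC -card_weightC weightE.
by congr (_ ^+ _ * _ ^+ _); apply: eq_card.
Qed.

Lemma dicke_sum_eq_mps_coef d y x :
  (forall i, dicke_sum d i = mps_coef (Amat y x) i) <->
  (forall k, (k <= n)%N -> d k / sqrtC ('C(n, k))%:R = y ^+ (n - k) * \sum_(j < n) x j ^+ k).
Proof.
split=> [eq_dm k lekn | eq_w i].
  by have [i <-] := exists_weight lekn; rewrite -dicke_sumE -mps_coefE.
by rewrite dicke_sumE mps_coefE eq_w ?weight_le.
Qed.
End DickeMPS.

Lemma div_eq_mulP (F : fieldType) (a s d p : F) : a != 0 -> s != 0 ->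
  d / s = a * p <-> p = d / (a * s).
Proof.
move=> a_neq0 s_neq0; split=> [e | ->]; last by field; rewrite a_neq0 s_neq0.
by rewrite -[d](divfK s_neq0) e; field; rewrite a_neq0 s_neq0.
Qed.

Lemma scaled_power_sums_iff (C : numClosedFieldType) n (d : nat -> C) y (x : 'I_n -> C) :
  (0 < n)%N -> d 0%N != 0 ->
  (forall k, (k <= n)%N -> d k / sqrtC ('C(n, k))%:R = y ^+ (n - k) * \sum_(j < n) x j ^+ k) <->
  (y ^+ n = d 0%N / n%:R /\
   forall k, (1 <= k <= n)%N -> \sum_(j < n) x j ^+ k = d k / (y ^+ (n - k) * sqrtC ('C(n, k))%:R)).
Proof.
move=> n_gt0 d0_neq0; have n_neq0 : n%:R != 0 :> C by rewrite pnatr_eq0 -lt0n.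
have sqrt_neq0 k : (k <= n)%N -> sqrtC ('C(n, k))%:R != 0 :> C.
  by move=> lekn; rewrite sqrtC_eq0 pnatr_eq0 -lt0n bin_gt0.
have cond0 : d 0%N / sqrtC ('C(n, 0))%:R = y ^+ (n - 0) * \sum_(j < n) x j ^+ 0 <->
    y ^+ n = d 0%N / n%:R.
  rewrite bin0 sqrtC1 divr1 subn0 (eq_bigr (fun=> 1)) => [|j _]; last by rewrite expr0.
  by rewrite sumr_const card_ord; split=> [-> | ->]; rewrite ?mulfK ?divfK.
have yk_neq0 k : y ^+ n = d 0%N / n%:R -> y ^+ (n - k) != 0.
  move=> yn; rewrite expf_neq0 //; apply: contraNneq d0_neq0 => y0.
  move: yn; rewrite y0 expr0n gtn_eqF //= mulr0n => /esym/eqP.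
  by rewrite mulf_eq0 invr_eq0 (negbTE n_neq0) orbF.
split=> [eq_k | [yn eq_k] [|k] lekn]; last 2 first.
- exact/cond0.
- by apply/div_eq_mulP; [exact: yk_neq0 | exact: sqrt_neq0 | exact: eq_k].
have yn := cond0.1 (eq_k 0%N (leq0n n)); split=> // k /andP [_ lekn].
by apply/div_eq_mulP; [exact: yk_neq0 | exact: sqrt_neq0 | exact: eq_k].
Qed.

Unset Implicit Arguments.
Theorem lemma3 (C : numClosedFieldType) (n : nat) (d : nat -> C)
  (hn : (1 <= n)%N) (hd0 : d 0%N != 0) :
  (forall (y : C) (x : 'I_n -> C),
     (forall i : bits n, @dicke_sum C n d i = @mps_coef C n n (@Amat C n y x) i) <->
     (y ^+ n = d 0%N / n%:R /\
      forall k : nat, (1 <= k <= n)%N ->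
        \sum_(j < n) x j ^+ k = d k / (y ^+ (n - k) * sqrtC ('C(n, k))%:R)))
  /\
  (forall y : C, y ^+ n = d 0%N / n%:R ->
     forall x : 'I_n -> C,
       (forall i : bits n, @dicke_sum C n d i = @mps_coef C n n (@Amat C n y x) i) <->
       @Ppoly C n (@zcoef C n d y) =
         lead_coef (@Ppoly C n (@zcoef C n d y)) *: \prod_(j < n) ('X - (x j)%:P)).
Proof.
split=> [y x | y yn x]; first by rewrite dicke_sum_eq_mps_coef scaled_power_sums_iff.
rewrite dicke_sum_eq_mps_coef scaled_power_sums_iff // Ppoly_eq_prod_XsubC.
by rewrite -power_sums_exp_series; split=> [[] | ].
Qed.
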